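(* In the two-user two-hop MAC described in the context, for every feasible $\mathbf B$ with $\mathbf B\mathbf h_1\neq0$ there exists a feasible $\mathbf B'$ such that $\mathbf B'\mathbf h_1$ is a nonzero vector in $\mathrm{span}\{\mathbf h_{01},\mathbf h_{02}\}$ and $\mathcal R^{out}_1(\mathbf B)\subseteq\mathcal R^{out}_1(\mathbf B')$. Consequently, to obtain the first outer bound $\bigcup_{\mathbf B}\mathcal R^{out}_1(\mathbf B)$ it suffices to take amplification vectors $\mathbf x=\mathbf B\mathbf h_1$ in $\mathrm{span}\{\mathbf h_{01},\mathbf h_{02}\}$.
   Context: Two sources $S_1,S_2$ with Gaussian inputs of powers $P_{S_1},P_{S_2}>0$, $n$ relays, one destination. Relay $k$ receives $y_k=h_{S_1,k}x_{S_1}+h_{S_2,k}x_{S_2}+z_k$ and sends $\beta_k y_k$; $\mathbf h_{0i}=(h_{S_i,k})_k$, $\mathbf h_1=(h_{k,D})_k$ have positive entries, $\mathbf B=\mathrm{diag}(\beta_1,\dots,\beta_n)$ with real gains, noises i.i.d. $\mathcal N(0,1)$. $\mathbf B$ is feasible if $|\beta_k|\le\beta_k^{Up}:=\sqrt{P_k^{Up}/(1+h_{S_1,k}^2P_{S_1}+h_{S_2,k}^2P_{S_2})}$ for all $k$. Let $\mathcal C(x)=\frac12\log_2(1+x)$, $\mathbf A=P_{S_1}\mathbf h_{01}\mathbf h_{01}^T+P_{S_2}\mathbf h_{02}\mathbf h_{02}^T$. For $\mathbf B\mathbf h_1\neq0$, $\mathcal R^{out}_1(\mathbf B)$ is the set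 of $(R_1,R_2)\ge0$ with $R_1\le\mathcal C\big((\mathbf h_1^T\mathbf B\mathbf h_{01})^2P_{S_1}/\mathbf h_1^T\mathbf B^2\mathbf h_1\big)$, $R_2\le\mathcal C\big((\mathbf h_1^T\mathbf B\mathbf h_{02})^2P_{S_2}/\mathbf h_1^T\mathbf B^2\mathbf h_1\big)$, $R_1+R_2\le\mathcal C\big(\mathbf h_1^T\mathbf B\mathbf A\mathbf B\mathbf h_1/\mathbf h_1^T\mathbf B^2\mathbf h_1\big)$. *)

From mathcomp Require Import all_boot all_order all_algebra.
From mathcomp Require Import all_classical all_reals all_analysis.
Set Implicit Arguments. Unset Strict Implicit. Unset Printing Implicit Defensive.
Import Order.TTheory GRing.Theory Num.Theory.
Local Open Scope ring_scope.

Section TwoHop.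
Variables (R : realType) (n : nat).

Definition Cfun (x : R) : R := ln (1 + x) / (2 * ln 2).

Definition Bmx (beta : 'cV[R]_n) : 'M[R]_n := diag_mx beta^T.

Definition sc (M : 'M[R]_1) : R := M 0 0.

Definition beta_up (PS1 PS2 : R) (Pup h01 h02 : 'cV[R]_n) (k : 'I_n) : R :=
  Num.sqrt (Pup k 0 / (1 + (h01 k 0)^+2 * PS1 + (h02 k 0)^+2 * PS2)).

Definition feasible (PS1 PS2 : R) (Pup h01 h02 : 'cV[R]_n) (beta : 'cV[R]_n) :=
  forall k : 'I_n, `|beta k 0| <= beta_up PS1 PS2 Pup h01 h02 k.

Definition Amx (PS1 PS2 : R) (h01 h02 : 'cV[R]_n) : 'M[R]_n :=
  PS1 *: (h01 *m h01^T) + PS2 *: (h02 *m h02^T).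

(* R^out_1(B), meaningful when B h1 <> 0 *)
Definition Rout1 (PS1 PS2 : R) (h01 h02 h1 : 'cV[R]_n) (beta : 'cV[R]_n)
  (R1 R2 : R) : Prop :=
  let B := Bmx beta in
  let den := sc (h1^T *m B *m B *m h1) in
  [/\ 0 <= R1, 0 <= R2,
      R1 <= Cfun ((sc (h1^T *m B *m h01))^+2 * PS1 / den),
      R2 <= Cfun ((sc (h1^T *m B *m h02))^+2 * PS2 / den) &
      R1 + R2 <= Cfun (sc (h1^T *m B *m Amx PS1 PS2 h01 h02 *m B *m h1) / den)].

Definition in_span2 (x h01 h02 : 'cV[R]_n) : Prop :=
  exists a b : R, x = a *: h01 + b *: h02.

End TwoHop.

From mathcomp Require Import all_boot all_order all_algebra.
From mathcomp Require Import all_classical all_reals all_analysis.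
From mathcomp Require Import ring lra.
Set Implicit Arguments. Unset Strict Implicit. Unset Printing Implicit Defensive.
Import Order.TTheory GRing.Theory Num.Theory.
Local Open Scope ring_scope.

(* The region R^out_1(B) depends on x = B h1 only through the two gains
   (x . h0i)^2 / |x|^2, which are invariant under rescaling x.  Replacing x by its
   orthogonal projection y onto span{h01, h02} keeps the inner products x . h0i
   and does not increase |x|, so both gains (and with them the region) can only
   grow; if y = 0 both gains of x vanish and any nonzero vector of the span will
   do.  Since h1 has positive entries, every direction y is realised as B' h1 for
   a diagonal B', and shrinking B' by a positive factor makes it feasible. *)

Section InnerProduct.
Variables (R : realFieldType) (n : nat).
Implicit Types (u v x y r : 'cV[R]_n) (a : R).

Definition dot u v : R := \sum_i u i 0 * v i 0.

Lemma dotC u v : dot u v = dot v u.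
Proof. by apply: eq_bigr => i _; rewrite mulrC. Qed.

Lemma dotDl u v x : dot (u + v) x = dot u x + dot v x.
Proof. by rewrite /dot -big_split; apply: eq_bigr => i _; rewrite !mxE mulrDl. Qed.

Lemma dotBl u v x : dot (u - v) x = dot u x - dot v x.
Proof. by rewrite /dot -sumrB; apply: eq_bigr => i _; rewrite !mxE mulrBl. Qed.

Lemma dotZl a u v : dot (a *: u) v = a * dot u v.
Proof. by rewrite /dot mulr_sumr; apply: eq_bigr => i _; rewrite !mxE mulrA. Qed.

Lemma dotDr u v x : dot x (u + v) = dot x u + dot x v.
Proof. by rewrite dotC dotDl !(dotC x). Qed.

Lemma dotBr u v x : dot x (u - v) = dot x u - dot x v.
Proof. by rewrite dotC dotBl !(dotC x). Qed.

Lemma dotZr a u v : dot v (a *: u) = a * dot v u.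
Proof. by rewrite dotC dotZl dotC. Qed.

Lemma dot0r u : dot u 0 = 0.
Proof. by rewrite /dot big1 // => i _; rewrite mxE mulr0. Qed.

Lemma dot_ge0 u : 0 <= dot u u.
Proof. by apply: sumr_ge0 => i _; rewrite -expr2 sqr_ge0. Qed.

Lemma dot_eq0 u : (dot u u == 0) = (u == 0).
Proof.
apply/idP/eqP => [|->]; last by rewrite dot0r.
rewrite psumr_eq0 => [/allP u0|i _]; last by rewrite -expr2 sqr_ge0.
apply/matrixP => i j; rewrite (ord1 j) mxE.
by have := u0 i (mem_index_enum i); rewrite -expr2 sqrf_eq0 => /eqP.
Qed.

Lemma dot_gt0 u : (0 < dot u u) = (u != 0).
Proof. by rewrite lt_def dot_ge0 dot_eq0 andbT. Qed.

Lemma dot_span2_orth r u v a b :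
  dot r u = 0 -> dot r v = 0 -> dot r (a *: u + b *: v) = 0.
Proof. by move=> ru rv; rewrite dotDr !dotZr ru rv !mulr0 addr0. Qed.

Lemma dot_le_orth x y : dot (x - y) y = 0 -> dot y y <= dot x x.
Proof.
move=> orth; have yx : dot y x = dot y y.
  by apply/eqP; rewrite -subr_eq0 (dotC y x) -dotBl orth.
by have := dot_ge0 (x - y); rewrite dotBr orth subr0 dotBl yx subr_ge0.
Qed.

Definition proj_line u x : 'cV[R]_n := (dot x u / dot u u) *: u.

Lemma proj_line_orth u x : dot (x - proj_line u x) u = 0.
Proof.
rewrite dotBl dotZl; have [/eqP|uu] := eqVneq (dot u u) 0.
  by rewrite dot_eq0 => /eqP->; rewrite !dot0r mulr0 subrr.
by rewrite divfK // subrr.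
Qed.

Definition proj_plane u v x : 'cV[R]_n :=
  proj_line u x + proj_line (v - proj_line u v) x.

Lemma proj_plane_in_span2 u v x :
  exists a b, proj_plane u v x = a *: u + b *: v.
Proof.
rewrite /proj_plane /proj_line; set a := _ / _; set b := _ / _; set c := _ / _.
exists (a - b * c), b.
by rewrite scalerBr scalerA scalerBl addrA addrAC.
Qed.

Lemma proj_plane_orth u v x :
  dot (x - proj_plane u v x) u = 0 /\ dot (x - proj_plane u v x) v = 0.
Proof.
set e := v - proj_line u v; set r := x - proj_plane u v x.
have eu : dot e u = 0 by apply: proj_line_orth.
have ru : dot r u = 0.
  by rewrite /r /proj_plane opprD addrA dotBl proj_line_orth dotZl eu mulr0 subr0.
have re : dot r e = 0.
  rewrite /r /proj_plane opprD addrA addrAC dotBl -/e proj_line_orth.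
  by rewrite dotZl (dotC u e) eu mulr0 subr0.
split=> //; rewrite -[v](subrK (proj_line u v)) -/e -[e]scale1r addrC.
exact: dot_span2_orth.
Qed.

Definition gain h x : R := dot x h ^+ 2 / dot x x.

Lemma gain_ge0 h x : 0 <= gain h x.
Proof. by rewrite divr_ge0 ?sqr_ge0 ?dot_ge0. Qed.

Lemma gainZ a h x : a != 0 -> gain h (a *: x) = gain h x.
Proof.
move=> a0; rewrite /gain !dotZl dotZr.
have [xx|xx] := eqVneq (dot x x) 0; first by rewrite xx !mulr0 !invr0 !mulr0.
by field; rewrite xx a0.
Qed.

Lemma gain_le h x y :
  dot y h = dot x h -> 0 < dot y y -> dot y y <= dot x x -> gain h x <= gain h y.
Proof.
move=> xyh yy yx; rewrite /gain xyh ler_wpM2l ?sqr_ge0 //.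
by rewrite lef_pV2 ?posrE // (lt_le_trans yy yx).
Qed.

Lemma exists_span2_gain_ge u v x : u != 0 ->
  exists y, [/\ y != 0, exists a b, y = a *: u + b *: v,
              gain u x <= gain u y & gain v x <= gain v y].
Proof.
move=> u0; have [ru rv] := proj_plane_orth u v x.
have ru' : dot (proj_plane u v x) u = dot x u.
  by apply/esym/eqP; rewrite -subr_eq0 -dotBl ru.
have rv' : dot (proj_plane u v x) v = dot x v.
  by apply/esym/eqP; rewrite -subr_eq0 -dotBl rv.
have [y0|y0] := eqVneq (proj_plane u v x) 0.
  exists u; split=> //; first by exists 1, 0; rewrite scale1r scale0r addr0.
    by rewrite /gain -ru' y0 dotC dot0r expr0n mul0r gain_ge0.
  by rewrite /gain -rv' y0 dotC dot0r expr0n mul0r gain_ge0.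
have yy : 0 < dot (proj_plane u v x) (proj_plane u v x) by rewrite dot_gt0.
have yx : dot (proj_plane u v x) (proj_plane u v x) <= dot x x.
  have [a [b yE]] := proj_plane_in_span2 u v x.
  by apply: dot_le_orth; rewrite {2}yE; apply: dot_span2_orth.
exists (proj_plane u v x); split=> //; first exact: proj_plane_in_span2.
  exact: gain_le.
exact: gain_le.
Qed.

Lemma exists_scale_le (c b : 'I_n -> R) :
  (forall k, 0 < b k) -> exists2 t, 0 < t & forall k, t * `|c k| <= b k.
Proof.
move=> b0; pose S := \sum_k `|c k| / b k.
have S0 : 0 <= S by apply: sumr_ge0 => k _; rewrite divr_ge0 // ltW.
exists (1 + S)^-1; first by rewrite invr_gt0; lra.
move=> k; rewrite mulrC ler_pdivrMr; last by lra.
have : `|c k| / b k <= S.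
  by rewrite /S (bigD1 k) //= lerDl sumr_ge0 // => i _; rewrite divr_ge0 // ltW.
by rewrite ler_pdivrMr // => ck; have := b0 k; nra.
Qed.

End InnerProduct.

Section TwoHopMAC.
Variables (R : realType) (n : nat) (PS1 PS2 : R) (Pup h01 h02 h1 : 'cV[R]_n).
Hypotheses (PS1_gt0 : 0 < PS1) (PS2_gt0 : 0 < PS2).
Hypotheses (h01_gt0 : forall k, 0 < h01 k 0) (h1_gt0 : forall k, 0 < h1 k 0).
Hypothesis Pup_gt0 : forall k, 0 < Pup k 0.

Lemma ler_Cfun (a b : R) : 0 <= a -> a <= b -> Cfun a <= Cfun b.
Proof.
move=> a0 ab; rewrite /Cfun ler_wpM2r //.
  by rewrite invr_ge0 mulr_ge0 // ltW // ln_gt0 //; lra.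
by rewrite ler_ln ?posrE; lra.
Qed.

Definition mac_region (g1 g2 R1 R2 : R) : Prop :=
  [/\ 0 <= R1, 0 <= R2, R1 <= Cfun (PS1 * g1), R2 <= Cfun (PS2 * g2) &
      R1 + R2 <= Cfun (PS1 * g1 + PS2 * g2)].

Lemma mac_region_mono g1 g2 g1' g2' R1 R2 :
  0 <= g1 -> 0 <= g2 -> g1 <= g1' -> g2 <= g2' ->
  mac_region g1 g2 R1 R2 -> mac_region g1' g2' R1 R2.
Proof.
move=> g10 g20 g11 g22 [R10 R20 r1 r2 r12].
have P1g1 : 0 <= PS1 * g1 by rewrite mulr_ge0 // ltW.
have P2g2 : 0 <= PS2 * g2 by rewrite mulr_ge0 // ltW.
split=> //.
- by apply: (le_trans r1); apply: ler_Cfun; rewrite // ler_pM2l.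
- by apply: (le_trans r2); apply: ler_Cfun; rewrite // ler_pM2l.
- apply: (le_trans r12); apply: ler_Cfun; first exact: addr_ge0.
  by rewrite lerD // ler_pM2l.
Qed.

Lemma sc_mul (M N : 'M[R]_1) : sc (M *m N) = sc M * sc N.
Proof. by rewrite /sc mxE big_ord1. Qed.

Lemma scD (M N : 'M[R]_1) : sc (M + N) = sc M + sc N.
Proof. by rewrite /sc mxE. Qed.

Lemma scZ a (M : 'M[R]_1) : sc (a *: M) = a * sc M.
Proof. by rewrite /sc mxE. Qed.

Lemma sc_trmx_mul (u v : 'cV[R]_n) : sc (u^T *m v) = dot u v.
Proof. by rewrite /sc !mxE; apply: eq_bigr => i _; rewrite mxE. Qed.

Lemma sc_Amx (x : 'cV[R]_n) :
  sc (x^T *m Amx PS1 PS2 h01 h02 *m x) = PS1 * dot x h01 ^+ 2 + PS2 * dot x h02 ^+ 2.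
Proof.
have quad a h : sc (x^T *m (a *: (h *m h^T)) *m x) = a * dot x h ^+ 2.
  rewrite -scalemxAr -scalemxAl scZ (mulmxA x^T h) -(mulmxA (x^T *m h)) sc_mul.
  by rewrite !sc_trmx_mul (dotC h) expr2.
by rewrite /Amx mulmxDr mulmxDl scD !quad.
Qed.

Lemma Rout1E beta R1 R2 :
  Rout1 PS1 PS2 h01 h02 h1 beta R1 R2 <->
  mac_region (gain h01 (Bmx beta *m h1)) (gain h02 (Bmx beta *m h1)) R1 R2.
Proof.
set x := Bmx beta *m h1.
have hB : h1^T *m Bmx beta = x^T by rewrite trmx_mul /Bmx tr_diag_mx.
have xv v : sc (h1^T *m Bmx beta *m v) = dot x v by rewrite hB sc_trmx_mul.
have xx : sc (h1^T *m Bmx beta *m Bmx beta *m h1) = dot x x by rewrite -mulmxA xv.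
have xAx : sc (h1^T *m Bmx beta *m Amx PS1 PS2 h01 h02 *m Bmx beta *m h1) =
           PS1 * dot x h01 ^+ 2 + PS2 * dot x h02 ^+ 2.
  by rewrite -sc_Amx hB -!mulmxA.
have snr a P : a ^+ 2 * P / dot x x = P * (a ^+ 2 / dot x x).
  by rewrite mulrAC mulrC.
have sum a b : (PS1 * a + PS2 * b) / dot x x = PS1 * (a / dot x x) + PS2 * (b / dot x x).
  by rewrite mulrDl !mulrA.
by rewrite /Rout1 /mac_region /gain /= xx xAx !xv sum !snr.
Qed.

Lemma Bmx_mulE (beta h : 'cV[R]_n) : Bmx beta *m h = \col_k (beta k 0 * h k 0).
Proof. by apply/matrixP => i j; rewrite (ord1 j) /Bmx mul_diag_mx !mxE. Qed.

Lemma beta_up_gt0 k : 0 < beta_up PS1 PS2 Pup h01 h02 k.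
Proof.
rewrite sqrtr_gt0 divr_gt0 //.
have := mulr_ge0 (sqr_ge0 (h01 k 0)) (ltW PS1_gt0).
have := mulr_ge0 (sqr_ge0 (h02 k 0)) (ltW PS2_gt0); lra.
Qed.

Lemma exists_feasible_realization (y : 'cV[R]_n) :
  exists2 beta, feasible PS1 PS2 Pup h01 h02 beta &
                exists2 t, 0 < t & Bmx beta *m h1 = t *: y.
Proof.
pose c k := y k 0 / h1 k 0.
have [t t0 tc] := exists_scale_le c beta_up_gt0.
exists (t *: \col_k c k).
  by move=> k; rewrite !mxE normrM gtr0_norm.
exists t => //; apply/matrixP => i j; rewrite (ord1 j) Bmx_mulE !mxE /c.
by rewrite -mulrA divfK ?gt_eqF.
Qed.

Lemma exists_span2_amplification beta : Bmx beta *m h1 != 0 ->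
  exists beta' : 'cV[R]_n,
    [/\ feasible PS1 PS2 Pup h01 h02 beta', Bmx beta' *m h1 != 0,
        in_span2 (Bmx beta' *m h1) h01 h02 &
        forall R1 R2 : R, Rout1 PS1 PS2 h01 h02 h1 beta R1 R2 ->
                          Rout1 PS1 PS2 h01 h02 h1 beta' R1 R2].
Proof.
move=> x0; have [i0 [j _]] := matrix0Pn _ x0.
have h01_neq0 : h01 != 0 by apply/matrix0Pn; exists i0, 0; rewrite gt_eqF.
have [y [y0 yspan g1 g2]] := exists_span2_gain_ge h02 (Bmx beta *m h1) h01_neq0.
have [beta' feas [t t0 eB]] := exists_feasible_realization y.
exists beta'; rewrite eB; split=> //.
- by rewrite scaler_eq0 negb_or gt_eqF.
- by case: yspan => a [b ->]; exists (t * a), (t * b); rewrite scalerDr !scalerA.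
move=> R1 R2; rewrite !Rout1E eB !gainZ ?gt_eqF //.
by apply: mac_region_mono => //; apply: gain_ge0.
Qed.

End TwoHopMAC.

Theorem lemma2 (R : realType) (n : nat) (PS1 PS2 : R)
  (Pup h01 h02 h1 : 'cV[R]_n) :
  0 < PS1 -> 0 < PS2 ->
  (forall k, 0 < h01 k 0) -> (forall k, 0 < h02 k 0) -> (forall k, 0 < h1 k 0) ->
  (forall k, 0 < Pup k 0) ->
  (forall beta : 'cV[R]_n,
     feasible PS1 PS2 Pup h01 h02 beta -> Bmx beta *m h1 != 0 ->
     exists beta' : 'cV[R]_n,
       [/\ feasible PS1 PS2 Pup h01 h02 beta',
           Bmx beta' *m h1 != 0,
           in_span2 (Bmx beta' *m h1) h01 h02 &
           forall R1 R2 : R, Rout1 PS1 PS2 h01 h02 h1 beta R1 R2 ->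
                             Rout1 PS1 PS2 h01 h02 h1 beta' R1 R2])
  /\
  (forall R1 R2 : R,
     (exists beta, [/\ feasible PS1 PS2 Pup h01 h02 beta, Bmx beta *m h1 != 0 &
                       Rout1 PS1 PS2 h01 h02 h1 beta R1 R2]) <->
     (exists beta, [/\ feasible PS1 PS2 Pup h01 h02 beta, Bmx beta *m h1 != 0,
                       in_span2 (Bmx beta *m h1) h01 h02 &
                       Rout1 PS1 PS2 h01 h02 h1 beta R1 R2])).
Proof.
move=> PS1_gt0 PS2_gt0 h01_gt0 h02_gt0 h1_gt0 Pup_gt0.
have reduce := exists_span2_amplification h02 PS1_gt0 PS2_gt0 h01_gt0 h1_gt0 Pup_gt0.
split=> [beta _|R1 R2]; first exact: reduce.
split=> [[beta [_ x0 inR]]|[beta [feas x0 _ inR]]]; last by exists beta.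
have [beta' [feas' x0' span' sub]] := reduce beta x0.
by exists beta'; split=> //; apply: sub.
Qed.
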